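(* Let $L$ be an $n\times n$ nonsingular M-matrix with integer entries, and let $\phi_1,\dots,\phi_n:\mathbb{R}\to\mathbb{R}$ be non-negative strictly increasing functions. Define $E_\phi(q)=\sum_{i=1}^n\phi_i((L^{-1}q)_i)$ for $q\in\mathbb{Z}^n$. A vector $f\in\mathbb{Z}^n$ with $f\ge0$ is $z$-superstable with respect to $L$ if and only if $f$ is the minimizer of $\min_{g\sim f,\ g\ge0}E_\phi(g)$ (over $g\in\mathbb{Z}^n$).
   Context: A Z-matrix is a square real matrix whose off-diagonal entries are all $\le 0$. A nonsingular M-matrix is a Z-matrix $L$ that is invertible with $L^{-1}$ having all entries nonnegative. Vector inequalities are entrywise. For $f,g\in\mathbb{Z}^n$, $f\sim g$ means $g-f=Lz$ for some $z\in\mathbb{Z}^n$. A vector $f\in\mathbb{Z}^n$ with $f\ge0$ is $z$-superstable with respect to $L$ if for every $z\in\mathbb{Z}^n$ with $z\ge0$ and $z\ne0$ there exists $i$ with $f_i-(Lz)_i<0$. *)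

From HB Require Import structures.
From mathcomp Require Import all_boot all_order all_algebra.
Set Implicit Arguments. Unset Strict Implicit. Unset Printing Implicit Defensive.
Import Order.TTheory GRing.Theory Num.Theory.
Local Open Scope ring_scope.

Definition Zmatrix (n : nat) (L : 'M[int]_n) : Prop :=
  forall i j : 'I_n, i != j -> L i j <= 0.

Definition nonsingular_Mmatrix (n : nat) (L : 'M[int]_n) : Prop :=
  [/\ Zmatrix L,
      (map_mx (intr : int -> rat) L) \in unitmx
    & forall i j : 'I_n, 0 <= invmx (map_mx (intr : int -> rat) L) i j].

Definition nonneg_vec (n : nat) (v : 'cV[int]_n) : Prop :=
  forall i : 'I_n, 0 <= v i 0.

Definition Lequiv (n : nat) (L : 'M[int]_n) (f g : 'cV[int]_n) : Prop :=
  exists z : 'cV[int]_n, g - f = L *m z.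

Definition zsuperstable (n : nat) (L : 'M[int]_n) (f : 'cV[int]_n) : Prop :=
  nonneg_vec f /\
  forall z : 'cV[int]_n, nonneg_vec z -> z != 0 ->
    exists i : 'I_n, f i 0 - (L *m z) i 0 < 0.

Definition Ephi (R : realFieldType) (n : nat) (L : 'M[int]_n)
    (phi : 'I_n -> R -> R) (q : 'cV[int]_n) : R :=
  \sum_(i < n)
     phi i ((invmx (map_mx (intr : int -> R) L) *m map_mx (intr : int -> R) q) i 0).

Definition is_unique_minimizer (R : realFieldType) (n : nat) (L : 'M[int]_n)
    (phi : 'I_n -> R -> R) (f : 'cV[int]_n) : Prop :=
  [/\ Lequiv L f f, nonneg_vec f &
      forall g : 'cV[int]_n, Lequiv L f g -> nonneg_vec g -> g != f ->
        Ephi L phi f < Ephi L phi g].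

From HB Require Import structures.
From mathcomp Require Import all_boot all_order all_algebra.
Import Order.TTheory GRing.Theory Num.Theory.
Local Open Scope ring_scope.

(* Since E_phi(q + L z) = sum_i phi_i ((L^-1 q)_i + z_i), moving from g to
   g + L z with z >= 0, z <> 0 strictly increases E_phi.  Hence f is the
   unique minimizer iff no g = f + L z with z having a negative entry is
   admissible.  Superstability gives exactly that: if f + L z >= 0, the
   negative part w of z satisfies L w <= f because L is a Z-matrix, so w = 0.
   Conversely, a nonzero z >= 0 with f - L z >= 0 would give a g = f - L z
   below f. *)

Lemma ltr_sum_homo (R : numDomainType) (I : finType) (phi : I -> R -> R)
    (a b : I -> R) (i0 : I) :
  (forall i, {homo phi i : x y / x < y}) ->
  (forall i, a i <= b i) -> a i0 < b i0 ->
  \sum_i phi i (a i) < \sum_i phi i (b i).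
Proof.
move=> phi_incr le_ab lt_ab0.
rewrite (bigD1 i0) //= [ltRHS](bigD1 i0) //=.
apply: ltr_leD; first exact: phi_incr.
by apply: ler_sum => i _; apply: ltW_homo.
Qed.

Lemma unitmx_map_intr (R : numFieldType) (n : nat) (L : 'M[int]_n) :
  (map_mx (intr : int -> R) L \in unitmx) = (\det L != 0).
Proof. by rewrite unitmxE unitfE det_map_mx intr_eq0. Qed.

Lemma Mmatrix_unitmx (R : numFieldType) (n : nat) (L : 'M[int]_n) :
  nonsingular_Mmatrix L -> map_mx (intr : int -> R) L \in unitmx.
Proof. by case=> _ + _; rewrite !unitmx_map_intr. Qed.

Section Energy.

Variables (R : realFieldType) (n : nat) (L : 'M[int]_n) (phi : 'I_n -> R -> R).
Hypothesis L_unit : map_mx (intr : int -> R) L \in unitmx.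
Hypothesis phi_incr : forall i, {homo phi i : x y / x < y}.

Lemma Ephi_addmul (q z : 'cV[int]_n) :
  Ephi L phi (q + L *m z) =
  \sum_i phi i ((invmx (map_mx intr L) *m map_mx intr q) i 0 + (z i 0)%:~R).
Proof.
apply: eq_bigr => i _.
by rewrite map_mxD map_mxM mulmxDr mulmxA mulVmx // mul1mx !mxE.
Qed.

Lemma Ephi_lt_addmul (q z : 'cV[int]_n) :
  nonneg_vec z -> z != 0 -> Ephi L phi q < Ephi L phi (q + L *m z).
Proof.
move=> z_ge0 z_neq0.
have [i0 zi0_neq0] : exists i0, z i0 0 != 0.
  apply/existsP; apply: contraNT z_neq0 => /existsPn z_eq0.
  by apply/eqP/matrixP => i j; rewrite ord1 mxE; apply/eqP/negPn.
rewrite Ephi_addmul; set x := invmx _ *m _.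
apply: (@ltr_sum_homo _ _ phi (fun i => x i 0) (fun i => x i 0 + (z i 0)%:~R) i0)
  => // [i|].
  by rewrite lerDl ler0z.
by rewrite ltrDl ltr0z lt_def zi0_neq0 z_ge0.
Qed.

End Energy.

Section Superstable.

Variables (n : nat) (L : 'M[int]_n).
Hypothesis L_Z : Zmatrix L.

Definition negpart (z : 'cV[int]_n) : 'cV[int]_n := \col_j Num.max (- z j 0) 0.

Lemma negpart_ge0 (z : 'cV[int]_n) : nonneg_vec (negpart z).
Proof. by move=> j; rewrite mxE le_max lexx orbT. Qed.

Lemma oppr_le_negpart (z : 'cV[int]_n) j : - z j 0 <= negpart z j 0.
Proof. by rewrite mxE le_max lexx. Qed.

(* If z_i < 0, row i of L w is bounded entrywise by -(L z)_i <= f_i; otherwise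
   w_i = 0 and only the off-diagonal terms, all <= 0, remain. *)
Lemma mul_negpart_le (f z : 'cV[int]_n) :
  nonneg_vec f -> nonneg_vec (f + L *m z) ->
  forall i, (L *m negpart z) i 0 <= f i 0.
Proof.
move=> f_ge0 fLz_ge0 i; have [zi_lt0 | zi_ge0] := ltP (z i 0) 0.
- have wi : negpart z i 0 = - z i 0.
    by rewrite mxE; apply/max_idPl; rewrite oppr_ge0 ltW.
  apply: (@le_trans _ _ (- (L *m z) i 0)).
    rewrite !mxE -sumrN; apply: ler_sum => j _.
    have [<-|neq_ij] := eqVneq i j; first by rewrite wi mulrN.
    by rewrite -mulrN; apply: ler_wnM2l; [exact: L_Z | exact: oppr_le_negpart].
  by rewrite -subr_ge0 opprK; have := fLz_ge0 i; rewrite mxE.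
- have wi : negpart z i 0 = 0 by rewrite mxE; apply/max_idPr; rewrite oppr_le0.
  apply: le_trans (f_ge0 i); rewrite mxE; apply: sumr_le0 => j _.
  have [<-|neq_ij] := eqVneq i j; first by rewrite wi mulr0.
  by apply: mulr_le0_ge0; [exact: L_Z | exact: negpart_ge0].
Qed.

Lemma zsuperstable_shift_ge0 (f z : 'cV[int]_n) :
  zsuperstable L f -> nonneg_vec (f + L *m z) -> nonneg_vec z.
Proof.
move=> [f_ge0 f_stable] fLz_ge0 j.
have [w_eq0 | w_neq0] := eqVneq (negpart z) 0.
  by rewrite -oppr_le0 (le_trans (oppr_le_negpart z j)) // w_eq0 mxE.
have [i] := f_stable _ (negpart_ge0 z) w_neq0.
by rewrite subr_lt0 ltNge mul_negpart_le.
Qed.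

End Superstable.

Theorem mainTheorem15 (R : realFieldType) (n : nat) (L : 'M[int]_n)
    (phi : 'I_n -> R -> R)
    (hL : nonsingular_Mmatrix L)
    (hphi_nonneg : forall (i : 'I_n) (x : R), 0 <= phi i x)
    (hphi_incr : forall (i : 'I_n) (x y : R), x < y -> phi i x < phi i y)
    (f : 'cV[int]_n) (hf : nonneg_vec f) :
  zsuperstable L f <-> is_unique_minimizer L phi f.
Proof.
have L_unit := @Mmatrix_unitmx R _ _ hL.
have E_lt := @Ephi_lt_addmul R n L phi L_unit hphi_incr.
have [L_Z _ _] := hL.
split=> [f_stable | [_ _ f_min]].
- split=> //; first by exists 0; rewrite subrr mulmx0.
  move=> g [z /eqP]; rewrite subr_eq addrC => /eqP -> g_ge0 g_neq_f.
  apply: E_lt; first exact: zsuperstable_shift_ge0 g_ge0.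
  by apply: contraNneq g_neq_f => ->; rewrite mulmx0 addr0.
- split=> // z z_ge0 z_neq0; apply/existsP; apply: contraT => /existsPn f_ge_Lz.
  have g_ge0 : nonneg_vec (f - L *m z).
    by move=> i; rewrite mxE [X in _ + X]mxE leNgt; apply: f_ge_Lz.
  have lt_gf : Ephi L phi (f - L *m z) < Ephi L phi f.
    by rewrite -[X in _ < Ephi _ _ X](subrK (L *m z)); apply: E_lt.
  have g_neq_f : f - L *m z != f by apply: contraTneq lt_gf => ->; rewrite ltxx.
  have f_eqv_g : Lequiv L f (f - L *m z) by exists (- z); rewrite addrC addKr mulmxN.
  by have := f_min _ f_eqv_g g_ge0 g_neq_f; rewrite ltNge (ltW lt_gf).
Qed.
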